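(* Let $S=s_1,\ldots,s_n$ be a sequence of positive real numbers, $\gamma>0$, $k$ a positive integer and $\epsilon>0$, and let $\Omega=\max_i s_i$ and $\omega=\min_i s_i$. The computational complexity of $\textit{ApproxExp}(S,\gamma,k,\epsilon)$ is $O(\epsilon^{-2}nk^3\log^2(\Omega/\omega))$.
   Context: A level sequence is $L=\ell_1,\ldots,\ell_n$ of integers with $0\le\ell_i\le k$; set $\ell_0=0$. The penalty is $\mathrm{pen}(x,y)=\max(y-x,0)\,\gamma\log n$; $p_{\exp}(s;\lambda)=\lambda e^{-\lambda s}$; $\mathrm{score}_{\exp}(L,S;\alpha,\beta,\gamma)=\sum_{i=1}^n\big[-\log p_{\exp}(s_i;\beta\alpha^{\ell_i})+\mathrm{pen}(\ell_{i-1},\ell_i)\big]$. $\textit{Viterbi}(S,\alpha,\beta,\gamma,k,p_{\exp})$ is a dynamic program returning a level sequence minimizing this score for fixed $\alpha,\beta$ in $O(nk)$ time. Algorithm $\textit{ExpAlpha}(S,\alpha,\gamma,k,\epsilon)$: let $\mu=\frac1n\sum_i s_i$ and $\beta=1/\mu$; while $\beta\ge1/(\alpha^k\mu)$: run $\textit{Viterbi}(S,\alpha,\beta,\gamma,k,p_{\exp})$ and set $\beta\leftarrow\beta/(1+\epsilon)$; return the best tested $(L,\beta)$. Algorithm $\textit{ApproxExp}(S,\gamma,k,\epsilon)$: let $\alpha=(\max_i s_i)/(\min_i s_i)$ and $c=(1+\epsilon)^{1/(2k)}$; while $\alpha\ge1$: run $\textit{ExpAlpha}(S,\alpha,\gamma,k,\epsilon/2)$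 and set $\alpha\leftarrow\alpha/c$. Return the best observed solution. *)

From Stdlib Require Import Reals Lra List.
Open Scope R_scope.

(* Cost model (unit-cost RAM on reals):
   - one call Viterbi(S,alpha,beta,gamma,k,p_exp) costs n*(k+1) units (the O(nk)
     dynamic program over levels 0..k), which also pays for computing the
     score of the returned sequence and comparing it with the best so far;
   - computing mu in ExpAlpha costs n units; computing max/min of S in
     ApproxExp costs n units;
   - all other scalar operations are free (they are O(1) per iteration and
     dominated by the Viterbi call of that iteration). *)

(* Generic while loop: [while cond x do (body x); x <- step x], returning the
   total cost of the executed bodies; [fuel] bounds the number of loop tests;
   [None] means the fuel ran out (or a nested loop ran out of fuel). *)
Fixpoint while_cost {A : Type} (fuel : nat) (cond : A -> bool) (step : A -> A)
    (body : A -> option nat) (x : A) : option nat :=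
  match fuel with
  | O => None
  | S f =>
      if cond x then
        match body x, while_cost f cond step body (step x) with
        | Some a, Some b => Some (a + b)%nat
        | _, _ => None
        end
      else Some 0%nat
  end.

Definition Rgeb (x y : R) : bool := if Rle_dec y x then true else false.

Definition seq_sum (S : list R) : R := fold_right Rplus 0 S.
Definition mean (S : list R) : R := seq_sum S / INR (length S).
Definition smax (S : list R) : R := fold_right Rmax (hd 0 S) S.
Definition smin (S : list R) : R := fold_right Rmin (hd 0 S) S.

Definition viterbi_cost (n k : nat) : nat := (n * (k + 1))%nat.

Definition exp_alpha_cost (fuel : nat) (S : list R) (alpha : R) (gamma : R)
    (k : nat) (eps : R) : option nat :=
  let n := length S in
  let mu := mean S in
  option_map (fun c => (n + c)%nat)
    (while_cost fuel
       (fun beta => Rgeb beta (1 / (alpha ^ k * mu)))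
       (fun beta => beta / (1 + eps))
       (fun _ => Some (viterbi_cost n k))
       (1 / mu)).

Definition approx_exp_cost (fuel : nat) (S : list R) (gamma : R) (k : nat)
    (eps : R) : option nat :=
  let n := length S in
  let c := Rpower (1 + eps) (1 / (2 * INR k)) in
  option_map (fun t => (n + t)%nat)
    (while_cost fuel
       (fun alpha => Rgeb alpha 1)
       (fun alpha => alpha / c)
       (fun alpha => exp_alpha_cost fuel S alpha gamma k (eps / 2))
       (smax S / smin S)).

(* Both loops of ApproxExp divide their control variable by a constant ratio
   until it falls below a threshold, so each runs at most (log of the range) /
   (log of the ratio) times.  The outer loop takes alpha from Omega/omega down
   to 1 with ratio (1+eps)^(1/2k), hence O(k log(Omega/omega) / eps) times; the
   inner loop takes beta through a range of ratio alpha^k <= (Omega/omega)^k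
   with ratio 1 + eps/2, hence also O(k log(Omega/omega) / eps) times, each
   iteration costing one Viterbi call, n(k+1).  The logarithms of the ratios
   are bounded below with ln(1+x) >= x/2 on (0,1]. *)
From Stdlib Require Import Reals Lra List ZArith Lia.
Open Scope R_scope.

Lemma while_cost_geometric (body : R -> option nat) (t r X : R) (B : nat) :
  0 < t -> 1 < r ->
  (forall y, t <= y -> y <= X -> exists b, body y = Some b /\ (b <= B)%nat) ->
  forall m fuel x, x < t * r ^ m -> x <= X -> (m < fuel)%nat ->
  exists c, while_cost fuel (fun y => Rgeb y t) (fun y => y / r) body x = Some c
            /\ (c <= m * B)%nat.
Proof.
  intros Ht Hr Hbody m.
  induction m as [|m IH]; intros [|fuel] x Hx HX Hfuel; try lia;
    simpl; unfold Rgeb at 1; destruct (Rle_dec t x) as [Htx|Htx].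
  - simpl in Hx; lra.
  - exists 0%nat; split; [reflexivity | lia].
  - destruct (Hbody x Htx HX) as [b [-> Hb]].
    assert (Hstep : x / r < t * r ^ m).
    { apply Rmult_lt_reg_r with r; [lra|].
      replace (x / r * r) with x by (field; lra). simpl in Hx; lra. }
    assert (Hbound : x / r <= X).
    { apply Rle_trans with x; [|exact HX].
      apply Rmult_le_reg_r with r; [lra|].
      replace (x / r * r) with x by (field; lra). nra. }
    destruct (IH fuel (x / r) Hstep Hbound ltac:(lia)) as [c [-> Hc]].
    exists (b + c)%nat; split; [reflexivity | simpl; lia].
  - exists 0%nat; split; [reflexivity | lia].
Qed.

Lemma ln_le (x y : R) : 0 < x -> x <= y -> ln x <= ln y.
Proof.
  intros Hx [Hxy | ->]; [left; apply ln_increasing |]; lra.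
Qed.

Lemma ln_1_plus_ge_half (x : R) : 0 < x -> x <= 1 -> x / 2 <= ln (1 + x).
Proof.
  intros Hx0 Hx1.
  assert (Hexp : 1 - ln (1 + x) <= / (1 + x)).
  { rewrite <- (exp_ln (1 + x)) at 2 by lra.
    rewrite <- exp_Ropp. apply exp_ineq1_le. }
  assert (Hinv : / (1 + x) <= 1 - x / 2).
  { apply Rmult_le_reg_r with (1 + x); [lra|].
    rewrite Rinv_l by lra. nra. }
  lra.
Qed.

Lemma pow_lt_pow_of_ln (a b : R) (k m : nat) :
  0 < a -> 0 < b -> INR k * ln a < INR m * ln b -> a ^ k < b ^ m.
Proof.
  intros Ha Hb Hln.
  rewrite <- (Rpower_pow k a Ha), <- (Rpower_pow m b Hb).
  apply exp_increasing. exact Hln.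
Qed.

Lemma exists_iterations (y l e : R) :
  0 <= y -> 0 < e -> e <= l -> exists m : nat, y < INR m * l /\ INR m <= y / e + 1.
Proof.
  intros Hy He Hel.
  assert (Hyl : 0 <= y / l)
    by (apply Rmult_le_pos; [lra | left; apply Rinv_0_lt_compat; lra]).
  assert (Hyle : y / l <= y / e)
    by (apply Rmult_le_compat_l; [lra | apply Rinv_le_contravar; lra]).
  destruct (archimed (y / l)) as [Hup1 Hup2].
  exists (Z.to_nat (up (y / l))).
  rewrite INR_IZR_INZ, Z2Nat.id by (apply le_IZR; simpl; lra).
  split; [|lra].
  apply Rmult_lt_reg_r with (/ l); [apply Rinv_0_lt_compat; lra|].
  rewrite Rmult_assoc, Rinv_r, Rmult_1_r by lra. exact Hup1.
Qed.

Lemma iteration_counts (k : nat) (L eps : R) :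
  (0 < k)%nat -> 0 <= L -> 0 < eps -> eps <= 1 ->
  exists mi mo : nat,
    INR k * L < INR mi * ln (1 + eps / 2)
    /\ L < INR mo * (ln (1 + eps) / (2 * INR k))
    /\ INR mi <= 4 * (INR k * L / eps) + 1
    /\ INR mo <= 4 * (INR k * L / eps) + 1.
Proof.
  intros Hk HL Heps0 Heps1.
  assert (HkR : 0 < INR k) by (apply lt_0_INR; exact Hk).
  destruct (exists_iterations (INR k * L) (ln (1 + eps / 2)) (eps / 4))
    as [mi [Hmi Hmi_le]]; [nra | lra | pose proof (ln_1_plus_ge_half (eps / 2)); lra |].
  destruct (exists_iterations L (ln (1 + eps) / (2 * INR k)) (eps / (4 * INR k)))
    as [mo [Hmo Hmo_le]]; [lra | apply Rdiv_lt_0_compat; lra | |].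
  { replace (eps / (4 * INR k)) with (eps / 2 / (2 * INR k)) by (field; lra).
    apply Rmult_le_compat_r; [left; apply Rinv_0_lt_compat; lra|].
    apply ln_1_plus_ge_half; lra. }
  exists mi, mo. repeat split; try assumption.
  - replace (4 * (INR k * L / eps)) with (INR k * L / (eps / 4)) by (field; lra).
    exact Hmi_le.
  - replace (4 * (INR k * L / eps)) with (L / (eps / (4 * INR k))) by (field; lra).
    exact Hmo_le.
Qed.

Lemma fold_right_Rmin_pos (S : list R) (d : R) :
  0 < d -> Forall (fun s => 0 < s) S -> 0 < fold_right Rmin d S.
Proof.
  intros Hd HS. induction HS; simpl; [exact Hd|].
  apply Rmin_glb_lt; assumption.
Qed.

Lemma smin_pos (S : list R) :
  S <> nil -> Forall (fun s => 0 < s) S -> 0 < smin S.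
Proof.
  intros Hne HS. apply fold_right_Rmin_pos; [|exact HS].
  destruct S as [|s S]; [congruence|]. now inversion HS.
Qed.

Lemma seq_sum_pos (S : list R) :
  S <> nil -> Forall (fun s => 0 < s) S -> 0 < seq_sum S.
Proof.
  intros Hne HS. induction HS as [|s S Hs HS IH]; [congruence|].
  unfold seq_sum in *; simpl.
  destruct S as [|s' S]; simpl in *; [lra|].
  specialize (IH ltac:(discriminate)). lra.
Qed.

Lemma mean_pos (S : list R) :
  S <> nil -> Forall (fun s => 0 < s) S -> 0 < mean S.
Proof.
  intros Hne HS. apply Rdiv_lt_0_compat; [now apply seq_sum_pos|].
  apply lt_0_INR. destruct S; [congruence | simpl; lia].
Qed.

Lemma exp_alpha_cost_le (S : list R) (alpha gamma eps : R) (k m fuel : nat) :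
  0 < mean S -> 1 <= alpha -> 0 < eps ->
  INR k * ln alpha < INR m * ln (1 + eps) -> (m < fuel)%nat ->
  exists c, exp_alpha_cost fuel S alpha gamma k eps = Some c
            /\ (c <= length S + m * viterbi_cost (length S) k)%nat.
Proof.
  intros Hmu Halpha Heps Hm Hfuel.
  assert (Hak : 0 < alpha ^ k) by (apply pow_lt; lra).
  assert (Hpow : alpha ^ k < (1 + eps) ^ m) by (apply pow_lt_pow_of_ln; lra).
  assert (Hstart : 1 / mean S < 1 / (alpha ^ k * mean S) * (1 + eps) ^ m).
  { replace (1 / (alpha ^ k * mean S) * (1 + eps) ^ m)
      with (1 / mean S * ((1 + eps) ^ m / alpha ^ k)) by (field; lra).
    rewrite <- (Rmult_1_r (1 / mean S)) at 1.
    apply Rmult_lt_compat_l; [apply Rdiv_lt_0_compat; lra|].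
    apply Rmult_lt_reg_r with (alpha ^ k); [exact Hak|].
    replace ((1 + eps) ^ m / alpha ^ k * alpha ^ k) with ((1 + eps) ^ m)
      by (field; lra). lra. }
  assert (Hthreshold : 0 < 1 / (alpha ^ k * mean S))
    by (apply Rdiv_lt_0_compat; [lra | now apply Rmult_lt_0_compat]).
  destruct (while_cost_geometric (fun _ => Some (viterbi_cost (length S) k))
              _ (1 + eps) (1 / mean S) (viterbi_cost (length S) k)
              Hthreshold ltac:(lra)
              (fun y _ _ => ex_intro _ _ (conj eq_refl (le_n _)))
              m fuel _ Hstart (Rle_refl _) Hfuel) as [c [Hc Hcm]].
  unfold exp_alpha_cost. rewrite Hc.
  eexists; split; [reflexivity | lia].
Qed.

Lemma approx_exp_cost_le (S : list R) (gamma eps : R) (k mi mo fuel : nat) :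
  0 < mean S -> 0 < smax S / smin S -> 0 < eps -> (0 < k)%nat ->
  INR k * ln (smax S / smin S) < INR mi * ln (1 + eps / 2) ->
  ln (smax S / smin S) < INR mo * (ln (1 + eps) / (2 * INR k)) ->
  (mi < fuel)%nat -> (mo < fuel)%nat ->
  exists c, approx_exp_cost fuel S gamma k eps = Some c
    /\ (c <= length S
             + mo * (length S + mi * viterbi_cost (length S) k))%nat.
Proof.
  intros Hmu HA Heps Hk Hmi Hmo Hfi Hfo.
  set (A := smax S / smin S) in *.
  set (ratio := Rpower (1 + eps) (1 / (2 * INR k))).
  assert (HkR : 0 < INR k) by (apply lt_0_INR; exact Hk).
  assert (Hratio : 1 < ratio).
  { rewrite <- (Rpower_O (1 + eps)) by lra.
    apply Rpower_lt; [lra | apply Rdiv_lt_0_compat; lra]. }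
  assert (Hln_ratio : ln ratio = ln (1 + eps) / (2 * INR k)).
  { unfold ratio. rewrite ln_Rpower. field. lra. }
  assert (Hstart : A < 1 * ratio ^ mo).
  { rewrite Rmult_1_l, <- (pow_1 A).
    apply pow_lt_pow_of_ln; [exact HA | lra |].
    rewrite Hln_ratio. simpl. lra. }
  assert (Hbody : forall alpha, 1 <= alpha -> alpha <= A ->
            exists b, exp_alpha_cost fuel S alpha gamma k (eps / 2) = Some b
              /\ (b <= length S + mi * viterbi_cost (length S) k)%nat).
  { intros alpha H1 HalphaA. apply exp_alpha_cost_le; try lra; try exact Hfi.
    pose proof (ln_le alpha A ltac:(lra) HalphaA). nra. }
  destruct (while_cost_geometric _ 1 ratio A _ Rlt_0_1 Hratio Hbody
              mo fuel A Hstart (Rle_refl _) Hfo) as [c [Hc Hcm]].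
  exists (length S + c)%nat. unfold approx_exp_cost.
  fold ratio A. rewrite Hc. split; [reflexivity | lia].
Qed.

Lemma nested_cost_le (n k mi mo : nat) (X : R) :
  (0 < k)%nat -> / 2 <= X -> INR mi <= 4 * X + 1 -> INR mo <= 4 * X + 1 ->
  INR (n + mo * (n + mi * viterbi_cost n k)) <= 100 * (INR n * INR k * X ^ 2).
Proof.
  intros Hk HX Hmi Hmo.
  unfold viterbi_cost.
  repeat (rewrite plus_INR || rewrite mult_INR).
  rewrite INR_1. replace (X ^ 2) with (X * X) by ring.
  assert (HkR : 1 <= INR k) by (apply (le_INR 1); lia).
  pose proof (pos_INR n). pose proof (pos_INR mi). pose proof (pos_INR mo).
  assert (Hnk1 : 0 <= INR n * (INR k + 1)) by nra.
  assert (Hinner : INR n + INR mi * (INR n * (INR k + 1))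
                   <= INR n + 6 * X * (INR n * (2 * INR k))).
  { apply Rplus_le_compat_l, Rmult_le_compat; try nra. }
  assert (Houter : INR mo * (INR n + INR mi * (INR n * (INR k + 1)))
                   <= 6 * X * (INR n + 6 * X * (INR n * (2 * INR k)))).
  { apply Rmult_le_compat; [lra | nra | lra | exact Hinner]. }
  assert (HXX : / 4 <= X * X) by nra.
  assert (HnX : INR n <= 4 * (INR n * X * X)) by nra.
  assert (HnX' : INR n * X <= 2 * (INR n * X * X)) by nra.
  assert (Hnk : INR n * X * X <= INR n * INR k * X * X).
  { apply Rmult_le_compat_r; [nra|]. apply Rmult_le_compat_r; [lra|]. nra. }
  nra.
Qed.

Theorem proposition9 :
  exists C : R, 0 < C /\
  forall (S : list R) (gamma : R) (k : nat) (eps : R),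
    S <> nil ->
    Forall (fun s => 0 < s) S ->
    0 < gamma ->
    (0 < k)%nat ->
    0 < eps -> eps <= 1 ->
    2 * smin S <= smax S ->
    exists (fuel c : nat),
      approx_exp_cost fuel S gamma k eps = Some c /\
      INR c <= C * (/ eps ^ 2 * INR (length S) * INR k ^ 3
                    * ln (smax S / smin S) ^ 2).
Proof.
  exists 100. split; [lra|].
  intros S gamma k eps Hne HS _ Hk Heps0 Heps1 Hspread.
  pose proof (smin_pos S Hne HS) as Hmin.
  assert (HA : 2 <= smax S / smin S).
  { apply Rmult_le_reg_r with (smin S); [lra|].
    replace (smax S / smin S * smin S) with (smax S) by (field; lra). lra. }
  (* The spread Omega/omega >= 2 keeps ln(Omega/omega) away from 0, so the
     bound also absorbs the additive costs n and the rounding of iteration counts. *)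
  assert (HL : / 2 < ln (smax S / smin S)).
  { pose proof ln_lt_2. pose proof (ln_le 2 _ ltac:(lra) HA). lra. }
  set (L := ln (smax S / smin S)) in *.
  assert (HkR : 1 <= INR k) by (apply (le_INR 1); lia).
  set (X := INR k * L / eps).
  assert (HX : / 2 <= X).
  { apply Rmult_le_reg_r with eps; [lra|].
    replace (X * eps) with (INR k * L) by (unfold X; field; lra). nra. }
  destruct (iteration_counts k L eps Hk ltac:(lra) Heps0 Heps1)
    as (mi & mo & Hmi & Hmo & Hmi_X & Hmo_X).
  fold X in Hmi_X, Hmo_X.
  set (fuel := Datatypes.S (Nat.max mi mo)).
  destruct (approx_exp_cost_le S gamma eps k mi mo fuel (mean_pos S Hne HS)
              ltac:(lra) Heps0 Hk Hmi Hmo ltac:(lia) ltac:(lia))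
    as [c [Hc Hcost]].
  exists fuel, c. split; [exact Hc|].
  replace (/ eps ^ 2 * INR (length S) * INR k ^ 3 * L ^ 2)
    with (INR (length S) * INR k * X ^ 2) by (unfold X; field; lra).
  apply Rle_trans with (1 := le_INR _ _ Hcost).
  now apply nested_cost_le.
Qed.
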